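(* Let $f_0(i)=i$ for all $i\ge1$. Then for every $m\ge1$ and $1\le k\le n$, $c_m(n,k)$ equals the number of words of length $n-1$ over the alphabet $\{0,1,\ldots,m+1\}$ having exactly $k-1$ letters equal to $m+1$ and avoiding $01$ (no letter $0$ is immediately followed by the letter $1$).
   Context: For $m\ge 1$, $f_m$ is the invert transform of $f_{m-1}$, i.e. $f_m(n)=f_{m-1}(n)+\sum_{i=1}^{n-1}f_{m-1}(i)f_m(n-i)$ for $n\ge1$. For $m\ge1$ the numbers $c_m(n,k)$, $0\le k\le n$, are defined by $c_m(0,0)=1$, $c_m(n,0)=0$ for $n\ge1$, and $c_m(n,k)=\sum_{i=1}^{n-k+1}f_{m-1}(i)\,c_m(n-i,k-1)$ for $1\le k\le n$. Words may be empty. *)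

From mathcomp Require Import all_boot.
Set Implicit Arguments. Unset Strict Implicit. Unset Printing Implicit Defensive.

Definition is_f_family (f : nat -> nat -> nat) : Prop :=
  (forall i, 1 <= i -> f 0 i = i) /\
  (forall m n, 1 <= m -> 1 <= n ->
     f m n = f m.-1 n + \sum_(1 <= i < n) f m.-1 i * f m (n - i)).

Definition is_c_family (f : nat -> nat -> nat) (c : nat -> nat -> nat -> nat) : Prop :=
  forall m, 1 <= m ->
    c m 0 0 = 1 /\
    (forall n, 1 <= n -> c m n 0 = 0) /\
    (forall n k, 1 <= k <= n ->
       c m n k = \sum_(1 <= i < (n - k + 1).+1) f m.-1 i * c m (n - i) k.-1).

Definition avoids01 (s : seq nat) : bool := ~~ infix [:: 0; 1] s.

(* Cut a word over {0,...,m+1} at its letters m+1.  Since m+1 is neither 0 nor 1,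
   the word avoids 01 iff every block does, and the blocks are arbitrary 01-avoiding
   words over {0,...,m}.  Splitting at the first m+1 gives the recursion of c_m, once
   f_{m-1}(i) is known to count the 01-avoiding words of length i-1 over {0,...,m}.
   The same first-occurrence split, applied to the letter m+1 in words over
   {0,...,m+1}, is the invert transform f_m of f_{m-1}; over {0,1} the 01-avoiding
   words are the 1^a 0^b, so there are i of length i-1, matching f_0(i) = i. *)

From mathcomp Require Import all_boot zify.
Set Implicit Arguments. Unset Strict Implicit. Unset Printing Implicit Defensive.

Lemma avoids01_cons x s :
  avoids01 (x :: s) = ~~ ((x == 0) && (head 0 s == 1)) && avoids01 s.
Proof.
rewrite /avoids01 infix_consl negb_or.
by case: x => [|x]; case: s => [|[|[|y]] s] //=; rewrite prefix0s.
Qed.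

Lemma avoids01_pivot t s1 s2 : 1 < t ->
  avoids01 (s1 ++ t :: s2) = avoids01 s1 && avoids01 s2.
Proof.
move=> t_gt1; elim: s1 => [|x s1 IH].
  by rewrite /= avoids01_cons; case: t t_gt1.
rewrite /= !avoids01_cons IH andbA.
by case: s1 {IH} => //=; case: t t_gt1 => [|[]].
Qed.

Section FirstOccurrence.
Variables (t : nat) (s : seq nat).
Hypothesis t_in_s : t \in s.
Let i := index t s.

Lemma take_drop_index : s = take i s ++ t :: drop i.+1 s.
Proof. by rewrite -drop_index // cat_take_drop. Qed.

Lemma notin_take_index : t \notin take i s.
Proof. by rewrite in_take // ltnn. Qed.

Lemma avoids01_index : 1 < t ->
  avoids01 s = avoids01 (take i s) && avoids01 (drop i.+1 s).
Proof. by move=> t_gt1; rewrite {1}take_drop_index avoids01_pivot. Qed.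

Lemma count_mem_index : count_mem t s = (count_mem t (drop i.+1 s)).+1.
Proof.
rewrite {1}take_drop_index count_cat /= eqxx.
by rewrite (count_memPn notin_take_index).
Qed.

End FirstOccurrence.

Fixpoint nwords (A L : nat) (P : pred (seq nat)) : nat :=
  if L is L'.+1 then \sum_(x < A) nwords A L' (fun s => P ((x : nat) :: s)) else P [::].

Lemma nwordsS A L (P : pred (seq nat)) :
  nwords A L.+1 P = \sum_(x < A) nwords A L (fun s => P ((x : nat) :: s)).
Proof. by []. Qed.

Lemma card_nwords A L (P : pred (seq nat)) :
  #|[set w : L.-tuple 'I_A | P (map val w)]| = nwords A L P.
Proof.
rewrite -sum1dep_card big_mkcond /=.
elim: L P => [|L IH] P /=.
  rewrite (big_pred1 [tuple]) /=; first by case: (P [::]).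
  by move=> w; rewrite /= tuple0; apply/esym/eqP; apply: val_inj.
pose cons_tuple (p : 'I_A * L.-tuple 'I_A) := [tuple of p.1 :: p.2].
have cons_tuple_bij : bijective cons_tuple.
  exists (fun w : L.+1.-tuple 'I_A => (thead w, [tuple of behead w])).
    by case=> x w; congr pair; apply: val_inj.
  by case=> -[|x w] // sz; apply: val_inj.
rewrite (reindex cons_tuple); last exact: onW_bij.
rewrite -(pair_big xpredT xpredT (fun x w => P (map val (cons_tuple (x, w))) : nat)).
by apply: eq_bigr => x _; rewrite -IH.
Qed.

Lemma eq_nwords A L (P Q : pred (seq nat)) :
  (forall s, size s = L -> P s = Q s) -> nwords A L P = nwords A L Q.
Proof.
elim: L P Q => [|L IH] P Q eqPQ /=; first by rewrite eqPQ.
by apply: eq_bigr => x _; apply: IH => s sz; rewrite eqPQ /= ?sz.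
Qed.

Lemma nwords_pred0 A L : nwords A L pred0 = 0.
Proof. by elim: L => //= L IH; rewrite big1. Qed.

Lemma nwords_andl A L (b : bool) (P : pred (seq nat)) :
  nwords A L (fun s => b && P s) = b * nwords A L P.
Proof. by case: b; rewrite ?mul1n ?nwords_pred0. Qed.

Lemma nwordsID A L (B P : pred (seq nat)) :
  nwords A L P = nwords A L (fun s => B s && P s) + nwords A L (fun s => ~~ B s && P s).
Proof.
elim: L B P => [|L IH] B P /=; first by case: (B _); case: (P _).
by rewrite -big_split; apply: eq_bigr => x _; apply: IH.
Qed.

Lemma nwords_notin_last A L (P : pred (seq nat)) :
  nwords A.+1 L (fun s => (A \notin s) && P s) = nwords A L P.
Proof.
elim: L P => [|L IH] P //=.
rewrite big_ord_recr /= [X in _ + X](_ : _ = 0) ?addn0; last first.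
  by rewrite -(nwords_pred0 A.+1 L); apply: eq_nwords => s _; rewrite in_cons eqxx.
apply: eq_bigr => x _; rewrite -IH; apply: eq_nwords => s _.
by rewrite in_cons eq_sym (ltn_eqF (ltn_ord x)).
Qed.

Definition first_split t (P Q : pred (seq nat)) s :=
  (t \in s) && P (take (index t s) s) && Q (drop (index t s).+1 s).

Lemma nwords_first_split A t L (P Q : pred (seq nat)) : t < A ->
  nwords A L (first_split t P Q) =
  \sum_(i < L) nwords A i (fun s => (t \notin s) && P s) * nwords A (L.-1 - i) Q.
Proof.
move=> t_lt_A; elim: L P => [|L IH] P; first by rewrite big_ord0.
have first_letter x : nwords A L (fun s => first_split t P Q (x :: s)) =
    (x == t) * (P [::] * nwords A L Q) +
    \sum_(i < L)
      nwords A i (fun s => (t \notin x :: s) && P (x :: s)) * nwords A (L.-1 - i) Q.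
  have [->|x_neq_t] := eqVneq x t.
    rewrite big1 => [|i _]; last first.
      by rewrite (@eq_nwords A i _ pred0) ?nwords_pred0 // => s _; rewrite mem_head.
    rewrite mul1n addn0 -nwords_andl; apply: eq_nwords => s _.
    by rewrite /first_split /= eqxx mem_head take0 drop0.
  have t_in_cons s : (t \in x :: s) = (t \in s) by rewrite in_cons eq_sym (negbTE x_neq_t).
  transitivity (nwords A L (first_split t (fun s => P (x :: s)) Q)).
    by apply: eq_nwords => s _; rewrite /first_split t_in_cons /= (negbTE x_neq_t).
  rewrite IH /= mul0n add0n.
  by apply: eq_bigr => i _; congr (_ * _); apply: eq_nwords => s _; rewrite t_in_cons.
rewrite nwordsS (eq_bigr _ (fun (x : 'I_A) _ => first_letter x)) big_split /=.
rewrite big_ord_recl /= subn0; congr (_ + _).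
  rewrite -big_distrl /= (bigD1 (Ordinal t_lt_A)) //= eqxx big1 => [|x x_neq_t].
    by rewrite addn0 mul1n.
  by rewrite -val_eqE /= in x_neq_t; rewrite (negbTE x_neq_t).
rewrite exchange_big; apply: eq_bigr => i _ /=; rewrite -big_distrl /=.
by rewrite add0n /bump /= add1n subnS -subn1 subnAC subn1.
Qed.

Definition avoiding A L := nwords A L avoids01.

Definition avoiding_count A t j L :=
  nwords A L (fun s => (count_mem t s == j) && avoids01 s).

Lemma avoiding2 L : avoiding 2 L = L.+1.
Proof.
have zero_first L' : nwords 2 L' (fun s => avoids01 (0 :: s)) = 1.
  elim: L' => // L' IH; rewrite nwordsS big_ord_recl big_ord1 /= -[RHS]addn0.
  congr (_ + _); first by rewrite -[RHS]IH; apply: eq_nwords => s _; rewrite !avoids01_cons.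
  by rewrite -[RHS](nwords_pred0 2 L'); apply: eq_nwords => s _; rewrite !avoids01_cons.
elim: L => // L IH; rewrite /avoiding nwordsS big_ord_recl big_ord1 zero_first add1n.
by rewrite -[in RHS]IH; congr _.+1; apply: eq_nwords => s _; rewrite avoids01_cons.
Qed.

Lemma avoiding_last A L : 1 < A ->
  avoiding A.+1 L = avoiding A L + \sum_(i < L) avoiding A i * avoiding A.+1 (L.-1 - i).
Proof.
move=> A_gt1; rewrite /avoiding (nwordsID _ _ (fun s => A \notin s)) nwords_notin_last.
congr (_ + _); rewrite (eq_bigr (fun i : 'I_L =>
    nwords A.+1 i (fun s => (A \notin s) && avoids01 s) * nwords A.+1 (L.-1 - i) avoids01));
  last by move=> i _; rewrite nwords_notin_last.
rewrite -nwords_first_split //; apply: eq_nwords => s _; rewrite /first_split.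
by rewrite negbK; case: (boolP (A \in s)) => // /avoids01_index ->.
Qed.

Lemma count_mem_eq0 (t : nat) s : (count_mem t s == 0) = (t \notin s).
Proof. by apply/eqP/count_memPn. Qed.

Lemma avoiding_count0 A L : avoiding_count A.+1 A 0 L = avoiding A L.
Proof.
rewrite /avoiding_count /avoiding -[RHS]nwords_notin_last.
by apply: eq_nwords => s _; rewrite count_mem_eq0.
Qed.

Lemma avoiding_countS A t j L : 1 < t < A ->
  avoiding_count A t j.+1 L =
  \sum_(i < L) avoiding_count A t 0 i * avoiding_count A t j (L.-1 - i).
Proof.
case/andP=> t_gt1 t_lt_A; rewrite /avoiding_count (eq_bigr (fun i : 'I_L =>
    nwords A i (fun s => (t \notin s) && avoids01 s) *
    nwords A (L.-1 - i) (fun s => (count_mem t s == j) && avoids01 s))); last first.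
  by move=> i _; congr (_ * _); apply: eq_nwords => s _; rewrite count_mem_eq0.
rewrite -nwords_first_split //; apply: eq_nwords => s _; rewrite /first_split.
have [t_in_s|t_notin_s] := boolP (t \in s); last by rewrite (count_memPn t_notin_s).
by rewrite (count_mem_index t_in_s) eqSS (avoids01_index t_in_s) // andbCA.
Qed.

Lemma avoiding_count_small A t j L : L < j -> avoiding_count A t j L = 0.
Proof.
move=> L_lt_j; rewrite -(nwords_pred0 A L); apply: eq_nwords => s size_s.
have count_lt_j : count_mem t s < j by rewrite (leq_ltn_trans (count_size _ s)) ?size_s.
by rewrite ltn_eqF.
Qed.

Lemma f_avoiding f : is_f_family f -> forall m n, 0 < n -> f m n = avoiding m.+2 n.-1.
Proof.
case=> f0 fS; elim=> [|m IHm] n n_gt0; first by rewrite f0 // avoiding2 prednK.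
elim/ltn_ind: n n_gt0 => n IHn n_gt0.
rewrite fS //= [RHS]avoiding_last // IHm //; congr (_ + _).
rewrite big_add1 big_mkord; apply: eq_bigr => i _; have i_lt := ltn_ord i.
by rewrite IHm // IHn; [congr (_ * avoiding _ _); lia | lia | lia].
Qed.

Lemma c_avoiding_count f c : is_f_family f -> is_c_family f c ->
  forall m, 0 < m -> forall n k, 0 < k <= n ->
  c m n k = avoiding_count m.+2 m.+1 k.-1 n.-1.
Proof.
move=> f_fam c_fam m m_gt0; have [c00 [cn0 cS]] := c_fam m m_gt0.
have f_block i : 0 < i -> f m.-1 i = avoiding_count m.+2 m.+1 0 i.-1.
  by move=> i_gt0; rewrite (f_avoiding f_fam) // prednK // avoiding_count0.
elim/ltn_ind=> n IHn [//|k] /andP[_ k_lt_n]; rewrite cS //.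
case: k k_lt_n => [|k] k_lt_n.
  rewrite subn1 addn1 prednK // big_nat_recr //= subnn c00 muln1 f_block //.
  rewrite big1_seq ?add0n // => i /andP[_]; rewrite mem_index_iota => /andP[_ i_lt_n].
  by rewrite cn0 ?muln0 // subn_gt0.
rewrite avoiding_countS ?ltnS ?m_gt0 //=.
rewrite big_add1 /= -(big_mkord xpredT (fun i =>
  avoiding_count m.+2 m.+1 0 i * avoiding_count m.+2 m.+1 k (n.-1.-1 - i))).
rewrite [RHS](big_cat_nat _ (n := n - k.+2 + 1)) /=; [|lia|lia].
rewrite [X in _ = _ + X]big1_seq ?addn0 => [|i]; last first.
  move=> /andP[_]; rewrite mem_index_iota => /andP[i_ge i_lt].
  by rewrite [X in _ * X]avoiding_count_small ?muln0 //; lia.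
apply: eq_big_nat => i /andP[_ i_lt].
by rewrite f_block // IHn; [congr (_ * avoiding_count _ _ _ _); lia | lia | lia].
Qed.

Theorem corollary25 (f : nat -> nat -> nat) (c : nat -> nat -> nat -> nat) :
  is_f_family f -> is_c_family f c ->
  forall m n k, 1 <= m -> 1 <= k <= n ->
    c m n k =
    #|[set w : n.-1.-tuple 'I_m.+2 |
        (count (fun x : 'I_m.+2 => val x == m.+1) w == k.-1)
        && avoids01 (map val w)]|.
Proof.
move=> f_fam c_fam m n k m_gt0 k_range.
rewrite (c_avoiding_count f_fam c_fam m_gt0 k_range) /avoiding_count -card_nwords.
by congr #|pred_of_set _|; apply/setP => w; rewrite !inE count_map.
Qed.
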